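(* Let $\varphi\colon (A,m,K)\to (B,n,L)$ be a local homomorphism of noetherian local rings. For a proper ideal $I$ of $A$, let $\pi_I\colon A\to A/I$ and $\pi_{IB}\colon B\to B/IB$ be the canonical surjections. (1) $\operatorname{rd}(\pi_I)\geq \operatorname{rd}(\pi_{IB})$ for every proper ideal $I$ of $A$. (2) $\varphi$ is basically regular if and only if $\operatorname{rd}(\pi_I)=\operatorname{rd}(\pi_{IB})$ for each proper ideal $I$ of $A$.
   Context: All rings are commutative and noetherian with identity. A local homomorphism $\varphi\colon (A,m,K)\to(B,n,L)$ satisfies $\varphi(m)\subseteq n$. The regularity defect $\operatorname{rd}(\varphi)$ is the $L$-dimension of the kernel of the natural $L$-linear map $m/m^2\otimes_K L\to n/n^2$, $\bar x\otimes\bar b\mapsto \overline{\varphi(x)b}$; $\varphi$ is basically regular if for every minimal basis (minimal generating set) $x_1,\dots,x_r$ of $m$, the elements $\varphi(x_1),\dots,\varphi(x_r)$ are part of a minimal basis of $n$ (vacuously true if $A$ is a field). *)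

From HB Require Import structures.
From Stdlib Require Import ClassicalEpsilon.
From mathcomp Require Import all_boot all_order all_algebra.
From mathcomp Require Import generic_quotient ring_quotient.
From mathcomp Require Import boolp.

Set Implicit Arguments.
Unset Strict Implicit.
Unset Printing Implicit Defensive.

Import GRing.Theory.
Local Open Scope ring_scope.

Section Defs.
Variable R : comNzRingType.

(* non-units of R; in a local ring this is the maximal ideal *)
Definition nonunit : pred R := fun x => ~~ `[< exists y : R, x * y = 1 >].

Definition is_ideal (P : R -> Prop) : Prop :=
  P 0 /\ forall a u v, P u -> P v -> P (a * u + v).

Definition gen (s : seq R) (x : R) : Prop :=
  exists c : seq R, x = \sum_(i < size s) c`_i * s`_i.

Definition noetherian : Prop :=
  forall P, is_ideal P -> exists s : seq R, forall x, P x <-> gen s x.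

Definition local_ring : Prop := is_ideal (fun x => nonunit x).

Definition in_msq (x : R) : Prop :=
  exists s : seq (R * R),
    all (fun p => nonunit p.1 && nonunit p.2) s /\ x = \sum_(p <- s) p.1 * p.2.

Definition minimal_basis (x : seq R) : Prop :=
  (forall y, nonunit y <-> gen x y) /\
  forall z : seq R, (forall y, nonunit y <-> gen z y) -> (size x <= size z)%N.

End Defs.

Section Rd.
Variables (R S : comNzRingType) (f : R -> S).

(* Given a minimal basis x = x_1..x_r of m, m/m^2 (x)_K L = L^r, and the natural
   map L^r -> n/n^2 sends (s_i) to the class of \sum_i f(x_i) s_i.
   [ker_family x k]: there are k vectors (with representatives in S^r) lying in
   the kernel which are linearly independent over L = S/n. *)
Definition ker_family (x : seq R) (k : nat) : Prop :=
  exists v : 'I_k -> 'I_(size x) -> S,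
    (forall j, in_msq (\sum_(i < size x) f x`_i * v j i)) /\
    (forall c : 'I_k -> S,
        (forall i, nonunit (\sum_(j < k) c j * v j i)) -> forall j, nonunit (c j)).

Definition kerdim (x : seq R) : nat :=
  \max_(k < (size x).+1 | `[< ker_family x k >]) k.

Definition rd : nat :=
  kerdim (epsilon (inhabits [::]) (fun x : seq R => minimal_basis x)).

Definition basically_regular : Prop :=
  forall x : seq R, minimal_basis x ->
    exists y : seq S, minimal_basis (map f x ++ y).

Definition local_hom : Prop :=
  [/\ local_ring R, local_ring S & forall a, nonunit a -> nonunit (f a)].

End Rd.

Definition ext_ideal (R S : comNzRingType) (f : R -> S) (Hf : local_hom f)
  (I : idealr R) : pred S := fun b =>
  `[< exists s : seq (R * S),
        all (fun p => p.1 \in I) s /\ b = \sum_(p <- s) f p.1 * p.2 >].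

Section Ext.
Variables (R S : comNzRingType) (f : R -> S) (Hf : local_hom f) (I : idealr R).

Lemma ext_ideal_closed : idealr_closed (ext_ideal Hf I).
Proof.
have [_ [n0 nD] fn] := Hf.
split.
- by apply/asboolP; exists [::]; rewrite big_nil.
- apply/negP => /asboolP [s [sI e]].
  have : nonunit (\sum_(p <- s) f p.1 * p.2).
    elim: s sI {e} => [|p s IH] /=; first by rewrite big_nil.
    case/andP => pI sI; rewrite big_cons mulrC.
    apply: nD; last exact: IH; apply: fn; apply/negP => /asboolP [y py].
    by move: (idealMr y pI); rewrite mulrC py idealr1.
  by rewrite -e /nonunit => /negP; apply; apply/asboolP; exists 1; rewrite mulr1.
- move=> a u v /asboolP [su [suI ->]] /asboolP [sv [svI ->]].
  apply/asboolP; exists ([seq (p.1, a * p.2) | p <- su] ++ sv); split.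
    by rewrite all_cat svI andbT all_map.
  rewrite big_cat big_map /= big_distrr /=; congr (_ + _).
  by apply: eq_bigr => p _; rewrite mulrCA.
Qed.

HB.instance Definition _ := isIdealr.Build S (ext_ideal Hf I) ext_ideal_closed.

End Ext.


Definition canon_surj (R : comNzRingType) (I : idealr R) : R -> {ideal_quot I} :=
  (\pi_({ideal_quot I}))%qT.

(* For an ideal J inside m, the kernel of m/m^2 -> (m/J)/(m/J)^2 = m/(m^2 + J)
   is (J + m^2)/m^2, so rd(pi_J) is the largest number of elements of J whose
   classes in the cotangent space m/m^2 are independent.  The images under
   phi of elements spanning (I + m^2)/m^2 span (IB + n^2)/n^2, whence (1).  If
   phi is basically regular, it maps families independent in m/m^2 to
   families independent in n/n^2 (write them over a minimal basis of m, whose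
   image is part of a minimal basis of n), whence equality.  Conversely,
   equality for I = m says that phi(x) spans a space of dimension |x| for a
   minimal basis x, so phi(x) is independent in n/n^2, and by Nakayama any
   independent family of n extends to a minimal basis. *)

From Pilot Require Import Defs.
From HB Require Import structures.
From mathcomp Require Import all_boot all_order all_algebra.
From mathcomp Require Import generic_quotient ring_quotient.
From Stdlib Require Import ClassicalEpsilon Classical.
From mathcomp Require Import boolp zify ring.

Set Implicit Arguments.
Unset Strict Implicit.
Unset Printing Implicit Defensive.

Import GRing.Theory.
Local Open Scope ring_scope.

Section Combinations.
Variable R : comNzRingType.
Local Notation nonunit := (@nonunit R).
Implicit Types (a u v x : R) (s t : seq R) (c d : nat -> R).

Lemma nonunitP x : nonunit x <-> ~ exists y, x * y = 1.
Proof.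
rewrite /nonunit; split => [/negP nu xU | nu].
  by apply: nu; apply/asboolP.
by apply/negP => /asboolP.
Qed.

Lemma nonunit1 : ~ nonunit 1.
Proof. by move/nonunitP; apply; exists 1; rewrite mulr1. Qed.

Lemma nonunitMl a u : nonunit u -> nonunit (a * u).
Proof.
move/nonunitP => nu; apply/nonunitP => -[y ay]; apply: nu.
by exists (a * y); rewrite mulrCA mulrA.
Qed.

Lemma nonunitMr a u : nonunit u -> nonunit (u * a).
Proof. by rewrite mulrC; apply: nonunitMl. Qed.

Lemma unit_invl x : ~ nonunit x -> exists r, r * x = 1.
Proof.
move=> xU; apply: NNPP => noinv; apply/xU/nonunitP => -[r xr].
by apply: noinv; exists r; rewrite mulrC.
Qed.

Lemma in_msq0 : in_msq (0 : R).
Proof. by exists [::]; rewrite big_nil. Qed.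

Lemma in_msqD u v : in_msq u -> in_msq v -> in_msq (u + v).
Proof.
move=> [s1 [h1 ->]] [s2 [h2 ->]]; exists (s1 ++ s2).
by rewrite all_cat h1 h2 big_cat.
Qed.

Lemma in_msqMl a u : in_msq u -> in_msq (a * u).
Proof.
move=> [s [h ->]]; exists [seq (a * p.1, p.2) | p <- s]; split.
  by rewrite all_map; apply/allP => p /(allP h) /andP [h1 h2] /=; rewrite nonunitMl.
by rewrite big_map big_distrr /=; apply: eq_bigr => p _; rewrite mulrA.
Qed.

Lemma in_msqB u v : in_msq u -> in_msq v -> in_msq (u - v).
Proof. by move=> hu hv; rewrite -mulN1r; apply/in_msqD/in_msqMl. Qed.

Lemma in_msq_sum (I : Type) (r : seq I) (P : pred I) (F : I -> R) :
  (forall i, P i -> in_msq (F i)) -> in_msq (\sum_(i <- r | P i) F i).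
Proof. by move=> h; elim/big_ind: _ => //; [exact: in_msq0 | exact: in_msqD]. Qed.

Lemma in_msqM u v : nonunit u -> nonunit v -> in_msq (u * v).
Proof. by move=> hu hv; exists [:: (u, v)]; rewrite /= hu hv big_seq1. Qed.

Definition lcomb c s := \sum_(0 <= i < size s) c i * s`_i.

Lemma genE s x : gen s x <-> exists c, x = lcomb c s.
Proof.
split => -[c ->]; first by exists (fun i => c`_i); rewrite /lcomb big_mkord.
exists (mkseq c (size s)); rewrite /lcomb big_mkord; apply: eq_bigr => i _.
by rewrite nth_mkseq.
Qed.

Lemma eq_lcomb c d s : (forall i, (i < size s)%N -> c i = d i) -> lcomb c s = lcomb d s.
Proof. by move=> cd; apply: eq_big_nat => i /andP [_ /cd ->]. Qed.

Lemma lcomb_cat c s t :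
  lcomb c (s ++ t) = lcomb c s + lcomb (fun i => c (size s + i)%N) t.
Proof.
rewrite /lcomb size_cat (@big_cat_nat _ _ _ (size s) 0 _ _ _ (leq0n _) (leq_addr _ _)) /=.
congr (_ + _); first by apply: eq_big_nat => i /andP [_ hi]; rewrite nth_cat hi.
rewrite -{1}(add0n (size s)) big_addn addKn; apply: eq_big_nat => i _.
by rewrite nth_cat ltnNge leq_addl /= addnK addnC.
Qed.

Lemma lcomb_cons c x t : lcomb c (x :: t) = c 0%N * x + lcomb (fun i => c i.+1) t.
Proof. by rewrite -cat1s lcomb_cat /lcomb /= big_nat1. Qed.

Lemma lcomb_catl c s t :
  lcomb c s = lcomb (fun i => if (i < size s)%N then c i else 0) (s ++ t).
Proof.
rewrite lcomb_cat (@eq_lcomb _ c) => [|i ->] //.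
by rewrite [X in _ + X]/lcomb big1 ?addr0 // => i _; rewrite ltnNge leq_addr mul0r.
Qed.

Lemma lcombD c d s : lcomb (fun i => c i + d i) s = lcomb c s + lcomb d s.
Proof. by rewrite /lcomb -big_split /=; apply: eq_bigr => i _; rewrite mulrDl. Qed.

Lemma lcombZ a c s : lcomb (fun i => a * c i) s = a * lcomb c s.
Proof. by rewrite /lcomb big_distrr /=; apply: eq_bigr => i _; rewrite mulrA. Qed.

Lemma lcomb0 s : lcomb (fun _ => 0) s = 0.
Proof. by rewrite /lcomb big1 // => i _; rewrite mul0r. Qed.

Lemma lcomb_sum k (c : nat -> R) (e : nat -> nat -> R) s :
  \sum_(0 <= j < k) c j * lcomb (e j) s =
  lcomb (fun i => \sum_(0 <= j < k) c j * e j i) s.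
Proof.
rewrite /lcomb; under eq_bigr do rewrite mulr_sumr.
rewrite exchange_big /=; apply: eq_bigr => i _; rewrite mulr_suml.
by apply: eq_bigr => j _; rewrite mulrA.
Qed.

Lemma lcomb_comp c (a : nat -> nat -> R) s t :
  (forall j, (j < size s)%N -> s`_j = lcomb (a j) t) ->
  lcomb c s = lcomb (fun i => \sum_(0 <= j < size s) c j * a j i) t.
Proof. by move=> sE; rewrite -lcomb_sum; apply: eq_big_nat => j /andP [_ /sE ->]. Qed.

Lemma sum_delta c n l : (l < n)%N -> \sum_(0 <= j < n) c j * (j == l)%:R = c l.
Proof.
move=> ln; rewrite (@big_cat_nat _ _ _ l 0 n _ _ (leq0n _) (ltnW ln)) /=.
rewrite (@big_ltn _ _ _ l n _ ln) /=.
rewrite eqxx mulr1 !big1_seq ?add0r ?addr0 // => i /andP [_];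
  rewrite mem_index_iota => /andP [hi1 hi2].
  by rewrite eq_sym (ltn_eqF hi1) mulr0.
by rewrite (ltn_eqF hi2) mulr0.
Qed.

Lemma lcomb_delta s p : (p < size s)%N -> lcomb (fun i => (i == p)%:R) s = s`_p.
Proof.
move=> ps; rewrite /lcomb -(sum_delta (fun i => s`_i) ps).
by apply: eq_bigr => i _; rewrite mulrC.
Qed.

Lemma gen_lcomb z s c : (forall i, (i < size s)%N -> gen z s`_i) -> gen z (lcomb c s).
Proof.
move=> zs; rewrite /lcomb big_seq; apply: (big_ind (gen z)).
- by apply/genE; exists (fun _ => 0); rewrite lcomb0.
- move=> _ _ /genE [d1 ->] /genE [d2 ->].
  by apply/genE; exists (fun i => d1 i + d2 i); rewrite lcombD.
- move=> i; rewrite mem_index_iota => /andP [_ /zs /genE [d ->]].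
  by apply/genE; exists (fun j => c i * d j); rewrite lcombZ.
Qed.

Definition nat_coef n (f : 'I_n -> R) : nat -> R :=
  fun m => if insub m is Some o then f o else 0.

Lemma nat_coefE n (f : 'I_n -> R) (o : 'I_n) : nat_coef f o = f o.
Proof. by rewrite /nat_coef valK. Qed.

Lemma sum_nat_coef n (f : 'I_n -> R) (g : nat -> R) :
  \sum_(0 <= i < n) nat_coef f i * g i = \sum_(i < n) f i * g i.
Proof. by rewrite big_mkord; apply: eq_bigr => i _; rewrite nat_coefE. Qed.

Lemma nth_map_enum_ord k (F : 'I_k -> R) (j : 'I_k) : [seq F i | i <- enum 'I_k]`_j = F j.
Proof. by rewrite (nth_map j) ?size_enum_ord // nth_ord_enum. Qed.

Definition rem_nth s i0 := take i0 s ++ drop i0.+1 s.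

Lemma size_rem_nth s i0 : (i0 < size s)%N -> size (rem_nth s i0) = (size s).-1.
Proof. by move=> i0s; rewrite /rem_nth size_cat size_takel ?size_drop; lia. Qed.

Lemma all_rem_nth (P : pred R) s i0 : all P s -> all P (rem_nth s i0).
Proof.
by move=> /allP Ps; apply/allP => a; rewrite mem_cat => /orP [/mem_take|/mem_drop] /Ps.
Qed.

Lemma lcomb_rem_nth c s i0 : (i0 < size s)%N ->
  lcomb c s =
  c i0 * s`_i0 + lcomb (fun p => c (if (p < i0)%N then p else p.+1)) (rem_nth s i0).
Proof.
move=> i0s; have i0s' := ltnW i0s.
rewrite {1}(_ : s = take i0 s ++ s`_i0 :: drop i0.+1 s); last first.
  by rewrite -drop_nth // cat_take_drop.
rewrite lcomb_cat lcomb_cons /rem_nth lcomb_cat !size_takel // addn0 addrCA.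
congr (_ + (_ + _)); first by apply: eq_lcomb => i; rewrite size_takel // => ->.
by apply: eq_lcomb => i _; rewrite ltnNge leq_addr /= addnS.
Qed.

Lemma nth_rem_nth s i0 i : (i0 < size s)%N -> (i < size s)%N -> i != i0 ->
  exists2 p, (p < size (rem_nth s i0))%N & (rem_nth s i0)`_p = s`_i.
Proof.
move=> i0s ltis ii0; have i0s' := ltnW i0s.
rewrite size_rem_nth // /rem_nth.
have [ltii0|leii0] := ltnP i i0.
  by exists i; [lia | rewrite nth_cat size_takel // ltii0 nth_take].
exists i.-1; first lia.
rewrite nth_cat size_takel // ltnNge (_ : (i0 <= i.-1)%N) /=; last lia.
by rewrite nth_drop; congr nth; lia.
Qed.

End Combinations.

Lemma lcomb_map (R S : comNzRingType) (f : {rmorphism R -> S}) c s :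
  f (lcomb c s) = lcomb (fun i => f (c i)) (map f s).
Proof.
rewrite /lcomb size_map rmorph_sum; apply: eq_big_nat => i /andP [_ hi].
by rewrite rmorphM (nth_map 0).
Qed.

Section LocalRing.
Variables (R : comNzRingType) (Rloc : local_ring R).
Local Notation nonunit := (@nonunit R).
Implicit Types (a u v x : R) (s t w y z : seq R) (c d : nat -> R).

Lemma nonunit0 : nonunit 0.
Proof. by case: Rloc. Qed.

Lemma nonunitD u v : nonunit u -> nonunit v -> nonunit (u + v).
Proof. by case: Rloc => _ Rideal hu hv; rewrite -[u]mul1r; apply: Rideal. Qed.

Lemma nonunitB u v : nonunit u -> nonunit v -> nonunit (u - v).
Proof. by case: Rloc => _ Rideal hu hv; rewrite addrC -mulN1r; apply: Rideal. Qed.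

Lemma nonunit_sum (I : Type) (r : seq I) (P : pred I) (F : I -> R) :
  (forall i, P i -> nonunit (F i)) -> nonunit (\sum_(i <- r | P i) F i).
Proof. by move=> h; elim/big_ind: _ => //; [exact: nonunit0 | exact: nonunitD]. Qed.

Lemma lcomb_nonunit s c : all nonunit s -> nonunit (lcomb c s).
Proof.
move=> hs; rewrite /lcomb big_seq; apply: nonunit_sum => i.
by rewrite mem_index_iota => /andP [_ hi]; apply/nonunitMl/(all_nthP 0 hs).
Qed.

Lemma lcomb_in_msq s c : all nonunit s ->
  (forall i, (i < size s)%N -> nonunit (c i)) -> in_msq (lcomb c s).
Proof.
move=> hs hc; rewrite /lcomb big_seq; apply: in_msq_sum => i.
by rewrite mem_index_iota => /andP [_ hi]; apply: in_msqM; [apply: hc | apply: (all_nthP 0 hs)].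
Qed.

Lemma nonunit_idealr_closed : idealr_closed (nonunit : pred R).
Proof.
split; [exact: nonunit0 | exact/negP/nonunit1 |].
by move=> a u v; case: Rloc => _; apply.
Qed.

Definition nonunit_pred : pred R := fun x => nonunit x.
HB.instance Definition _ := isIdealr.Build R nonunit_pred nonunit_idealr_closed.
Definition maxideal : idealr R := nonunit_pred.

Definition residue_field := {ideal_quot maxideal}.
HB.instance Definition _ := GRing.ComNzRing.on residue_field.

Definition res : R -> residue_field := \pi_residue_field%qT.
HB.instance Definition _ :=
  GRing.isZmodMorphism.Build R residue_field res (pi_is_zmod_morphism _).
HB.instance Definition _ :=
  GRing.isMonoidMorphism.Build R residue_field res (pi_is_monoid_morphism _).

Lemma res_eq0 x : (res x == 0) = nonunit x.
Proof. by rewrite -(rmorph0 res) /res -Quotient.idealrBE subr0. Qed.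

Lemma res_eq0P x : res x = 0 <-> nonunit x.
Proof. by rewrite -res_eq0; split => [->|/eqP]. Qed.

Lemma res_repr (q : residue_field) : res (repr q) = q.
Proof. exact: reprK. Qed.

Definition res_inv (q : residue_field) : residue_field :=
  if q == 0 then 0 else res (epsilon (inhabits 0) (fun r => r * repr q = 1)).

Lemma res_mulVf q : q != 0 -> res_inv q * q = 1.
Proof.
move=> q0; rewrite /res_inv (negPf q0).
have /unit_invl qinv : ~ nonunit (repr q) by move/res_eq0P; rewrite res_repr; apply/eqP.
by rewrite -{2}(res_repr q) -rmorphM (epsilon_spec _ _ qinv) rmorph1.
Qed.

Lemma res_inv0 : res_inv 0 = 0.
Proof. by rewrite /res_inv eqxx. Qed.

HB.instance Definition _ :=
  GRing.ComNzRing_isField.Build residue_field res_mulVf res_inv0.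

Definition generating y := forall x, nonunit x <-> gen y x.

Lemma generating_nonunit y : generating y -> all nonunit y.
Proof.
move=> hy; apply/(all_nthP 0) => i hi; apply/hy/genE.
by exists (fun j => (j == i)%:R); rewrite lcomb_delta.
Qed.

Lemma in_msq_coef y q : generating y -> in_msq q ->
  exists d, (forall i, nonunit (d i)) /\ q = lcomb d y.
Proof.
move=> hy [ps [h ->]]; elim: ps h => [|p ps IH] /=.
  by exists (fun _ => 0); split; [move=> _; exact: nonunit0 | rewrite big_nil lcomb0].
rewrite big_cons => /andP [/andP [h1 h2] /IH [d [hd ->]]].
have /genE [e ->] := proj1 (hy _) h2.
exists (fun i => p.1 * e i + d i); split; last by rewrite lcombD lcombZ.
by move=> i; apply: nonunitD; [apply: nonunitMr | apply: hd].
Qed.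

(* Linear algebra in the cotangent space m/m^2 over the residue field R/m:
   [cot_free s] says the classes of s are independent, [cot_span s x] that the
   class of x lies in their span. *)
Definition cot_free s :=
  forall c, in_msq (lcomb c s) -> forall i, (i < size s)%N -> nonunit (c i).

Definition cot_span s x := exists c, in_msq (x - lcomb c s).

Lemma cot_span_lcomb s c : cot_span s (lcomb c s).
Proof. by exists c; rewrite subrr; exact: in_msq0. Qed.

Lemma cot_span_nth s p : (p < size s)%N -> cot_span s s`_p.
Proof. by move=> ps; rewrite -lcomb_delta //; apply: cot_span_lcomb. Qed.

Lemma cot_span_choice s t : (forall i, (i < size s)%N -> cot_span t s`_i) ->
  exists e : nat -> nat -> R, forall i, in_msq (s`_i - lcomb (e i) t).
Proof.
move=> st; suff /choice [e he] i : exists c, in_msq (s`_i - lcomb c t) by exists e.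
have [/st //|si] := ltnP i (size s).
by exists (fun _ => 0); rewrite nth_default // lcomb0 subr0; exact: in_msq0.
Qed.

Lemma generating_cot_span y a : generating y -> nonunit a -> cot_span y a.
Proof. by move=> ygen /ygen /genE [c ->]; apply: cot_span_lcomb. Qed.

Lemma generating_coefs y s : generating y -> all nonunit s ->
  exists a : nat -> nat -> R, forall j, (j < size s)%N -> s`_j = lcomb (a j) y.
Proof.
move=> ygen sm; suff /choice [a ha] j : exists d, (j < size s)%N -> s`_j = lcomb d y.
  by exists a.
have [ltjs | lesj] := ltnP j (size s); last by exists (fun _ => 0).
by have /ygen /genE [d ->] := all_nthP 0 sm j ltjs; exists d.
Qed.

Lemma exists_relation_mod_m k r (E : nat -> nat -> R) : (r < k)%N ->
  exists c, (exists2 j, (j < k)%N & ~ nonunit (c j)) /\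
    forall l, (l < r)%N -> nonunit (\sum_(0 <= j < k) c j * E j l).
Proof.
case: k => // k ltrk.
pose M : 'M[residue_field]_(k.+1, r) := \matrix_(j, l) res (E j l).
have /rowV0Pn [v /sub_kermxP vM /rV0Pn [j0 vj0]] : kermx M != 0.
  by rewrite kermx_eq0 /row_free neq_ltn (leq_ltn_trans (rank_leq_col M) ltrk).
exists (fun j => repr (v 0 (inord j))); split.
  by exists j0 => //; rewrite inord_val => /res_eq0P; rewrite res_repr; apply/eqP.
move=> l ltlr; apply/res_eq0P; rewrite rmorph_sum /= big_mkord.
have /rowP /(_ (Ordinal ltlr)) := vM; rewrite !mxE => vM0; apply: etrans vM0.
by apply: eq_bigr => j _; rewrite rmorphM /= res_repr inord_val mxE.
Qed.

Lemma right_inverse_mod_m k r (a : nat -> nat -> R) :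
  (forall c, (forall i, (i < r)%N -> nonunit (\sum_(0 <= j < k) c j * a j i)) ->
     forall j, (j < k)%N -> nonunit (c j)) ->
  exists P : nat -> nat -> R, forall j l, (j < k)%N -> (l < k)%N ->
    nonunit (\sum_(0 <= i < r) a j i * P i l - (j == l)%:R).
Proof.
case: k => [|k] afree; first by exists (fun _ _ => 0).
case: r afree => [|r] afree.
  by exfalso; apply: (@nonunit1 R); apply: (afree (fun _ => 1) _ 0%N).
pose M : 'M[residue_field]_(k.+1, r.+1) := \matrix_(j, i) res (a j i).
have /row_freeP [P MP] : row_free M.
  apply: inj_row_free => v vM; apply/rowP => j; rewrite mxE.
  suff /res_eq0P : nonunit (repr (v 0 (inord j))) by rewrite res_repr inord_val.
  apply: (afree (fun j' => repr (v 0 (inord j'))) _ j (ltn_ord j)) => i ltir.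
  apply/res_eq0P; rewrite rmorph_sum /= big_mkord.
  have /rowP /(_ (Ordinal ltir)) := vM; rewrite !mxE => vM0; apply: etrans vM0.
  by apply: eq_bigr => j' _; rewrite rmorphM /= res_repr inord_val mxE.
exists (fun i l => repr (P (inord i) (inord l))) => j l ltjk ltlk.
apply/res_eq0P; rewrite rmorphB /= rmorph_sum /= rmorph_nat big_mkord.
have := congr1 (fun N : 'M_k.+1 => N (inord j) (inord l)) MP; rewrite !mxE.
have -> : (inord j == inord l :> 'I_k.+1) = (j == l).
  by apply/eqP/eqP => [/(congr1 val) /=|->]; rewrite ?inordK.
move=> <-; apply/eqP; rewrite subr_eq0; apply/eqP.
by apply: eq_bigr => i _; rewrite rmorphM /= res_repr inord_val mxE inordK.
Qed.

(* Nakayama's lemma, via Cramer's rule: the relation (1 - D) y = C z with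
   D = 0 mod m has a unit determinant. *)
Lemma nakayama_generating y z : generating y -> all nonunit z ->
  (forall i, (i < size y)%N -> cot_span z y`_i) -> generating z.
Proof.
move=> ygen zm /cot_span_choice [C hC] x.
split; last by move=> /genE [d ->]; exact: lcomb_nonunit.
have /choice [D hD] i : exists d,
    (forall k, nonunit (d k)) /\ y`_i - lcomb (C i) z = lcomb d y.
  exact: in_msq_coef.
suff yz : forall i, (i < size y)%N -> gen z y`_i by move=> /ygen /genE [c ->]; exact: gen_lcomb.
pose s := size y.
pose N : 'M[R]_s := 1%:M - \matrix_(i, k) D i k.
pose Cm : 'M[R]_(s, size z) := \matrix_(i, l) C i l.
pose Y : 'cV[R]_s := \col_i y`_i.
pose Z : 'cV[R]_(size z) := \col_l z`_l.
have NY : N *m Y = Cm *m Z.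
  apply/colP => i; rewrite mulmxBl mul1mx !mxE.
  have -> : \sum_k (\matrix_(i, k) D i k : 'M[R]_s) i k * Y k 0 = lcomb (D i) y.
    by rewrite /lcomb big_mkord; apply: eq_bigr => k _; rewrite !mxE.
  have -> : \sum_k Cm i k * Z k 0 = lcomb (C i) z.
    by rewrite /lcomb big_mkord; apply: eq_bigr => k _; rewrite !mxE.
  by rewrite -(proj2 (hD i)); ring.
have [r rN] : exists r, r * \det N = 1.
  apply: unit_invl => /res_eq0P; rewrite -det_map_mx (_ : map_mx res N = 1%:M) ?det1.
    by move/eqP; rewrite oner_eq0.
  apply/matrixP => i k; rewrite !mxE rmorphB /= rmorphMn /= rmorph1.
  by rewrite (proj2 (res_eq0P _) (proj1 (hD i) k)) subr0.
have YE : Y = r *: (\adj N *m Cm *m Z).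
  by rewrite -mulmxA -NY mulmxA mul_adj_mx mul_scalar_mx scalerA rN scale1r.
move=> i ltis; apply/genE.
exists (nat_coef (fun l : 'I_(size z) => r * (\adj N *m Cm) (Ordinal ltis) l)).
have := congr1 (fun M : 'cV[R]_s => M (Ordinal ltis) 0) YE; rewrite !mxE /= => ->.
rewrite /lcomb sum_nat_coef mulr_sumr; apply: eq_bigr => l _.
by rewrite !mxE mulrA.
Qed.

Lemma cot_span_trans s t a : (forall i, (i < size s)%N -> cot_span t s`_i) ->
  cot_span s a -> cot_span t a.
Proof.
move=> /cot_span_choice [e he] [c hc].
exists (fun l => \sum_(0 <= i < size s) c i * e i l); rewrite -lcomb_sum.
have -> : a - \sum_(0 <= i < size s) c i * lcomb (e i) t =
    (a - lcomb c s) + \sum_(0 <= i < size s) c i * (s`_i - lcomb (e i) t).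
  have -> : \sum_(0 <= i < size s) c i * (s`_i - lcomb (e i) t) =
      lcomb c s - \sum_(0 <= i < size s) c i * lcomb (e i) t.
    by rewrite [lcomb c s]/lcomb -sumrB; apply: eq_bigr => i _; rewrite mulrBr.
  by ring.
by apply: in_msqD => //; apply: in_msq_sum => i _; apply: in_msqMl.
Qed.

Lemma cot_span_lin s r a b : cot_span s a -> cot_span s b -> cot_span s (r * a + b).
Proof.
move=> [c1 h1] [c2 h2]; exists (fun i => r * c1 i + c2 i); rewrite lcombD lcombZ.
have -> : r * a + b - (r * lcomb c1 s + lcomb c2 s) =
    r * (a - lcomb c1 s) + (b - lcomb c2 s) by ring.
by apply: in_msqD => //; apply: in_msqMl.
Qed.

Lemma cot_span_catr s t a : cot_span s a -> cot_span (s ++ t) a.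
Proof.
by move=> [c hc]; exists (fun i => if (i < size s)%N then c i else 0); rewrite -lcomb_catl.
Qed.

Lemma cot_span_rem_nth s c i0 : in_msq (lcomb c s) -> (i0 < size s)%N ->
  ~ nonunit (c i0) -> forall i, (i < size s)%N -> cot_span (rem_nth s i0) s`_i.
Proof.
move=> hc i0s /unit_invl [r rc] i ltis.
have [-> | ii0] := eqVneq i i0; last first.
  by have [p ps <-] := nth_rem_nth i0s ltis ii0; apply: cot_span_nth.
exists (fun p => - r * c (if (p < i0)%N then p else p.+1)); rewrite lcombZ.
have -> : s`_i0 - - r * lcomb (fun p => c (if (p < i0)%N then p else p.+1))
                          (rem_nth s i0) = r * lcomb c s.
  by rewrite (lcomb_rem_nth c i0s) mulrDr mulrA rc mul1r; ring.
exact: in_msqMl.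
Qed.

Lemma minimal_basis_cot_free s : minimal_basis s -> cot_free s.
Proof.
move=> [sgen smin] c hc i0 i0s; apply: NNPP => ci0U.
have sm := generating_nonunit sgen.
have := smin _ (nakayama_generating sgen (all_rem_nth i0 sm)
                  (cot_span_rem_nth hc i0s ci0U)).
by rewrite size_rem_nth //; lia.
Qed.

Lemma cot_free_size_le w t : cot_free w -> all nonunit t ->
  (forall j, (j < size w)%N -> cot_span t w`_j) -> (size w <= size t)%N.
Proof.
move=> wfree tm /cot_span_choice [e he]; rewrite leqNgt; apply/negP => lttw.
have [c [[j0 j0w cj0U] hc]] := exists_relation_mod_m e lttw.
apply/cj0U/(wfree c) => //.
have -> : lcomb c w = \sum_(0 <= j < size w) c j * (w`_j - lcomb (e j) t) +
    lcomb (fun l => \sum_(0 <= j < size w) c j * e j l) t.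
  rewrite -lcomb_sum -big_split [lcomb c w]/lcomb /=; apply: eq_bigr => j _.
  by rewrite -mulrDr subrK.
apply: in_msqD; first by apply: in_msq_sum => j _; apply: in_msqMl.
exact: lcomb_in_msq.
Qed.

Lemma cot_free_size_le_generating w y : generating y -> cot_free w ->
  all nonunit w -> (size w <= size y)%N.
Proof.
move=> ygen wfree wm; apply: cot_free_size_le (generating_nonunit ygen) _ => //.
by move=> j ltjw; apply/generating_cot_span/(all_nthP 0 wm).
Qed.

Lemma cot_free_catl s t : cot_free (s ++ t) -> cot_free s.
Proof.
move=> stfree c; rewrite (lcomb_catl c s t) => /stfree cm i ltis.
by have := cm i; rewrite size_cat ltis; apply; apply: ltn_addr.
Qed.

Lemma cot_free_snoc z a : cot_free z -> ~ cot_span z a -> nonunit a ->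
  cot_free (z ++ [:: a]).
Proof.
move=> zfree za am c hc.
have zaE : lcomb c (z ++ [:: a]) = lcomb c z + c (size z) * a.
  by rewrite lcomb_cat lcomb_cons addn0 [lcomb _ [::]]/lcomb big_geq ?addr0.
have czm : nonunit (c (size z)).
  apply: NNPP => /unit_invl [r rc]; apply: za.
  exists (fun i => - r * c i); rewrite lcombZ.
  have -> : a - - r * lcomb c z = r * lcomb c (z ++ [:: a]).
    by rewrite zaE mulrDr mulrA rc mul1r; ring.
  exact: in_msqMl.
have cz : in_msq (lcomb c z).
  have -> : lcomb c z = lcomb c (z ++ [:: a]) - c (size z) * a by rewrite zaE; ring.
  by apply: in_msqB => //; apply: in_msqM.
move=> i; rewrite size_cat addn1 ltnS leq_eqVlt => /orP [/eqP -> //|].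
exact: zfree.
Qed.

Lemma cot_free_complete t z : cot_free z -> all nonunit z -> all nonunit t ->
  exists z', [/\ cot_free (z ++ z'), all nonunit z' &
                forall i, (i < size t)%N -> cot_span (z ++ z') t`_i].
Proof.
elim: t z => [|a t IH] z zfree zm; first by exists [::]; rewrite cats0.
move=> /andP [am tm].
have [za | zNa] := pselect (cot_span z a).
  have [z' [zz'free z'm zz'span]] := IH z zfree zm tm.
  exists z'; split => // -[_ | i /= ltit]; last exact: zz'span.
  exact: cot_span_catr.
have zafree := cot_free_snoc zfree zNa am.
have zam : all nonunit (z ++ [:: a]) by rewrite all_cat zm /= am.
have [z' [zz'free z'm zz'span]] := IH _ zafree zam tm.
exists (a :: z'); rewrite -cat1s catA /= am; split => // -[_ | i /= ltit].
  have aE : ((z ++ [:: a]) ++ z')`_(size z) = a by rewrite -catA nth_cat ltnn subnn.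
  have := @cot_span_nth ((z ++ [:: a]) ++ z') (size z); rewrite aE; apply.
  by rewrite !size_cat /=; lia.
exact: zz'span.
Qed.

Lemma cot_free_extends y z : minimal_basis y -> cot_free z -> all nonunit z ->
  exists z', minimal_basis (z ++ z').
Proof.
move=> [ygen _] zfree zm.
have [z' [zz'free z'm zz'span]] := cot_free_complete zfree zm (generating_nonunit ygen).
have zz'm : all nonunit (z ++ z') by rewrite all_cat zm z'm.
exists z'; split; first exact: nakayama_generating ygen zz'm zz'span.
by move=> t tgen; apply: cot_free_size_le_generating.
Qed.

Lemma minimal_basis_exists : noetherian R -> exists s, minimal_basis s.
Proof.
move=> noethR; have [s0 s0gen] := noethR _ Rloc.
elim: (size s0) {-2}s0 (leqnn (size s0)) s0gen => [|n IH] s ltsn sgen.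
  by exists s; split => // z _; move: ltsn; rewrite leqn0 => /eqP ->.
have [smin | /not_all_ex_not [z]] :=
  pselect (forall z, generating z -> (size s <= size z)%N); first by exists s.
by move=> zsmall; have [zgen ltzs] := imply_to_and _ _ zsmall; apply: (IH z) => //; lia.
Qed.

Definition cot_free_in (J : pred R) k :=
  exists h, [/\ size h = k, {subset h <= J} & cot_free h].

End LocalRing.

Section Quotient.
Variables (R : comNzRingType) (Rloc : local_ring R) (J : idealr R).
Local Notation nonunit := (@nonunit R).
Local Notation Q := {ideal_quot J}.
Local Notation pi := (canon_surj J).

HB.instance Definition _ := GRing.isZmodMorphism.Build R Q pi (pi_is_zmod_morphism _).
HB.instance Definition _ := GRing.isMonoidMorphism.Build R Q pi (pi_is_monoid_morphism _).

Lemma canon_surj_repr (q : Q) : pi (repr q) = q.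
Proof. exact: reprK. Qed.

Lemma canon_surjP a b : pi a = pi b :> Q <-> a - b \in J.
Proof. by rewrite Quotient.idealrBE /canon_surj; split => [->|/eqP]. Qed.

Lemma idealr_nonunit a : a \in J -> nonunit a.
Proof.
move=> aJ; apply/nonunitP => -[r ar].
by have := idealMr r aJ; rewrite mulrC ar idealr1.
Qed.

Lemma nonunit_canon_surj a : Defs.nonunit (pi a) <-> nonunit a.
Proof.
split => [piaN | am].
  apply/nonunitP => -[r ar]; move/nonunitP: piaN; apply; exists (pi r).
  by rewrite -rmorphM /= ar rmorph1.
apply/nonunitP => -[q aq].
have /canon_surjP /idealr_nonunit aq1 : pi (a * repr q) = pi 1.
  by rewrite rmorphM /= canon_surj_repr aq rmorph1.
apply: (@nonunit1 R); rewrite -(subKr (a * repr q) 1).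
by apply: nonunitB => //; apply: nonunitMr.
Qed.

Lemma in_msq_canon_surj a : in_msq (pi a) <-> exists b, in_msq b /\ a - b \in J.
Proof.
split => [[s [sm piaE]] | [_ [[s [sm ->]] /canon_surjP ->]]].
  exists (\sum_(p <- s) repr p.1 * repr p.2); split.
    exists [seq (repr p.1, repr p.2) | p <- s]; split; last by rewrite big_map.
    rewrite all_map; apply/allP => p /(allP sm) /andP [p1m p2m] /=.
    by apply/andP; split; apply/nonunit_canon_surj; rewrite canon_surj_repr.
  apply/canon_surjP; rewrite piaE rmorph_sum /=; apply: eq_bigr => p _.
  by rewrite rmorphM /= !canon_surj_repr.
exists [seq (pi p.1, pi p.2) | p <- s]; split.
  rewrite all_map; apply/allP => p /(allP sm) /andP [p1m p2m] /=.
  by apply/andP; split; apply/nonunit_canon_surj.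
by rewrite big_map rmorph_sum /=; apply: eq_bigr => p _; rewrite rmorphM.
Qed.

Lemma ker_family_cot_free_in x k : minimal_basis x ->
  ker_family pi x k -> cot_free_in J k.
Proof.
move=> xbasis [v [vker vfree]]; have xfree := minimal_basis_cot_free Rloc xbasis.
pose w j i := repr (v j i).
have /choice [b bJ] (j : 'I_k) : exists b, in_msq b /\
    \sum_(i < size x) x`_i * w j i - b \in J.
  apply/in_msq_canon_surj; rewrite rmorph_sum /=.
  under eq_bigr do rewrite rmorphM /= canon_surj_repr; exact: vker.
pose H j := \sum_(i < size x) x`_i * w j i - b j.
exists [seq H j | j <- enum 'I_k]; split.
- by rewrite size_map size_enum_ord.
- by move=> _ /mapP [j _ ->]; case: (bJ j).
move=> c hc i; rewrite size_map size_enum_ord => ltik.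
pose f (l : 'I_(size x)) := \sum_(j < k) c j * w j l.
have cH : lcomb c [seq H j | j <- enum 'I_k] = lcomb (nat_coef f) x - \sum_(j < k) c j * b j.
  rewrite /lcomb sum_nat_coef size_map size_enum_ord big_mkord.
  under eq_bigr do rewrite nth_map_enum_ord mulrBr mulr_sumr.
  rewrite sumrB exchange_big /=; congr (_ - _); apply: eq_bigr => l _.
  by rewrite /f mulr_suml; apply: eq_bigr => j _; rewrite mulrA mulrAC.
have fm (l : 'I_(size x)) : nonunit (f l).
  rewrite -(nat_coefE f); apply: xfree (ltn_ord l).
  have -> : lcomb (nat_coef f) x =
      lcomb c [seq H j | j <- enum 'I_k] + \sum_(j < k) c j * b j by rewrite cH subrK.
  by apply: in_msqD => //; apply: in_msq_sum => j _; apply/in_msqMl/(proj1 (bJ j)).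
apply/nonunit_canon_surj; apply: (vfree (fun j => pi (c j)) _ (Ordinal ltik)) => l.
have -> : \sum_(j < k) pi (c j) * v j l = pi (f l).
  by rewrite rmorph_sum; apply: eq_bigr => j _; rewrite rmorphM /= canon_surj_repr.
exact/nonunit_canon_surj.
Qed.

Lemma cot_free_in_ker_family x k : minimal_basis x ->
  cot_free_in J k -> ker_family pi x k.
Proof.
move=> [xgen _] [h [hk hJ hfree]].
have hm : all nonunit h by apply/allP => a /hJ /idealr_nonunit.
have [C hC] := generating_coefs xgen hm.
exists (fun j i => pi (C j i)); split.
  move=> j; have ltjh : (j < size h)%N by rewrite hk.
  have -> : \sum_(i < size x) pi x`_i * pi (C j i) = pi h`_j.
    rewrite (hC j ltjh) /lcomb big_mkord rmorph_sum /=.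
    by apply: eq_bigr => i _; rewrite rmorphM mulrC.
  have -> : pi h`_j = pi 0 by apply/canon_surjP; rewrite subr0; apply/hJ/mem_nth.
  by rewrite rmorph0; exact: in_msq0.
move=> c cm j; pose d j := repr (c j).
have dm : in_msq (lcomb (nat_coef d) h).
  rewrite (lcomb_comp _ hC); apply: lcomb_in_msq (generating_nonunit xgen) _ => i ltix.
  rewrite hk sum_nat_coef; apply/nonunit_canon_surj; rewrite rmorph_sum /=.
  under eq_bigr do rewrite rmorphM /= canon_surj_repr.
  exact: (cm (Ordinal ltix)).
have := hfree _ dm j; rewrite hk nat_coefE => /(_ (ltn_ord j)).
by rewrite -(canon_surj_repr (c j)) => /nonunit_canon_surj.
Qed.

Lemma minimal_basis_epsilon : noetherian R ->
  minimal_basis (epsilon (inhabits [::]) (fun x : seq R => minimal_basis x)).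
Proof. by move=> noethR; apply: epsilon_spec; apply: minimal_basis_exists. Qed.

Lemma cot_free_in_le_rd k : noetherian R -> cot_free_in J k -> (k <= rd pi)%N.
Proof.
move=> /minimal_basis_epsilon xbasis Jk; move: xbasis; rewrite /rd /kerdim.
set x := epsilon _ _ => xbasis.
have ltkx : (k < (size x).+1)%N.
  case: Jk => h [<- hJ hfree]; rewrite ltnS.
  by apply: (cot_free_size_le_generating Rloc xbasis.1 hfree); apply/allP => a /hJ /idealr_nonunit.
apply: (@leq_bigmax_cond _ _ (fun i : 'I_(size x).+1 => nat_of_ord i) (Ordinal ltkx)).
exact/asboolP/cot_free_in_ker_family.
Qed.

Lemma cot_free_in_rd : noetherian R -> cot_free_in J (rd pi).
Proof.
move=> /minimal_basis_epsilon xbasis; move: xbasis; rewrite /rd /kerdim.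
set x := epsilon _ _ => xbasis.
have ker0 : `[< ker_family pi x (@ord0 (size x)) >].
  by apply/asboolP/cot_free_in_ker_family => //; exists [::]; split => // c _ i.
rewrite (bigmax_eq_arg ord0) //; case: arg_maxnP => // i /asboolP xi _.
exact: ker_family_cot_free_in xi.
Qed.

Lemma cot_span_maximal h : noetherian R -> size h = rd pi -> {subset h <= J} ->
  cot_free h -> forall g, g \in J -> cot_span h g.
Proof.
move=> noethR hrd hJ hfree g gJ; apply: NNPP => hNg.
suff : ((rd pi).+1 <= rd pi)%N by rewrite ltnn.
apply: cot_free_in_le_rd => //; exists (h ++ [:: g]); split.
- by rewrite size_cat hrd addn1.
- by move=> a; rewrite mem_cat => /orP [/hJ // | ]; rewrite inE => /eqP ->.
- exact: cot_free_snoc hfree hNg (idealr_nonunit gJ).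
Qed.

End Quotient.

Section LocalHom.
Variables (A B : comNzRingType) (phi : {rmorphism A -> B}) (Hphi : local_hom phi).
Variables (noethA : noetherian A) (noethB : noetherian B).
Local Notation NA := (@nonunit A).
Local Notation NB := (@nonunit B).

Let Aloc : local_ring A. Proof. by case: Hphi. Qed.
Let Bloc : local_ring B. Proof. by case: Hphi. Qed.
Let phi_nonunit a : NA a -> NB (phi a). Proof. by case: Hphi => _ _; apply. Qed.

Lemma in_msq_map a : in_msq a -> in_msq (phi a).
Proof.
move=> [s [sm ->]]; exists [seq (phi p.1, phi p.2) | p <- s]; split.
  rewrite all_map; apply/allP => p /(allP sm) /andP [p1m p2m] /=.
  by rewrite !phi_nonunit.
by rewrite big_map rmorph_sum; apply: eq_bigr => p _; rewrite rmorphM.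
Qed.

Lemma cot_span_map s a : cot_span s a -> cot_span (map phi s) (phi a).
Proof.
by move=> [c hc]; exists (fun i => phi (c i)); rewrite -lcomb_map -rmorphB; apply: in_msq_map.
Qed.

Lemma cot_span_ext_ideal (I : idealr A) t b :
  (forall a, a \in I -> cot_span t (phi a)) -> b \in ext_ideal Hphi I -> cot_span t b.
Proof.
move=> It /asboolP [s [sI ->]]; elim: s sI => [|p s IH] /=.
  by rewrite big_nil; exists (fun _ => 0); rewrite lcomb0 subrr; apply: in_msq0.
by move=> /andP [pI sI]; rewrite big_cons mulrC; apply: cot_span_lin; [apply: It | apply: IH].
Qed.

Lemma rd_ext_ideal_le (I : idealr A) :
  (rd (canon_surj (ext_ideal Hphi I)) <= rd (canon_surj I))%N.
Proof.
have [h [hrd hI hfree]] := cot_free_in_rd Aloc I noethA.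
have [w [wrd wI wfree]] := cot_free_in_rd Bloc (ext_ideal Hphi I) noethB.
rewrite -wrd -hrd -(size_map phi h); apply: (cot_free_size_le Bloc wfree).
  by rewrite all_map; apply/allP => a /hI /idealr_nonunit /phi_nonunit.
move=> j ltjw; apply: (cot_span_ext_ideal (I := I)); last exact/wI/mem_nth.
by move=> a aI; apply/cot_span_map/(cot_span_maximal Aloc noethA hrd).
Qed.

(* Write h over a minimal basis x of m; cot-freeness of h gives a right inverse P
   of the coefficient matrix modulo m, and cot-freeness of phi(x) then pulls any
   relation among the phi(h_j) back to one among the phi(x_i). *)
Lemma cot_free_map h : basically_regular phi -> cot_free h -> all NA h ->
  cot_free (map phi h).
Proof.
move=> phibr hfree hm.
have [x xbasis] := minimal_basis_exists Aloc noethA.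
have [y /(minimal_basis_cot_free Bloc) /cot_free_catl phixfree] := phibr x xbasis.
have [a ha] := generating_coefs xbasis.1 hm.
have [P hP] : exists P : nat -> nat -> A, forall j l, (j < size h)%N -> (l < size h)%N ->
    NA (\sum_(0 <= i < size x) a j i * P i l - (j == l)%:R).
  apply: (right_inverse_mod_m Aloc) => c ca; apply: hfree.
  by rewrite (lcomb_comp _ ha); apply: (lcomb_in_msq (generating_nonunit xbasis.1)).
move=> c hc l; rewrite size_map => ltlh.
pose e i := \sum_(0 <= j < size h) c j * phi (a j i).
have em i : (i < size x)%N -> NB (e i).
  have := phixfree e _ i; rewrite size_map; apply.
  suff <- : lcomb c (map phi h) = lcomb e (map phi x) by [].
  have phihE j : (j < size (map phi h))%N ->
      (map phi h)`_j = lcomb (fun i => phi (a j i)) (map phi x).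
    by rewrite size_map => ltjh; rewrite (nth_map 0) // (ha j ltjh) lcomb_map.
  by rewrite (lcomb_comp _ phihE) size_map.
have cE : \sum_(0 <= j < size h) c j *
      phi (\sum_(0 <= i < size x) a j i * P i l - (j == l)%:R) =
    \sum_(0 <= i < size x) e i * phi (P i l) - c l.
  under eq_bigr do rewrite rmorphB rmorph_sum rmorph_nat mulrBr mulr_sumr.
  rewrite sumrB sum_delta // exchange_big /=; congr (_ - _); apply: eq_bigr => i _.
  by rewrite mulr_suml; apply: eq_bigr => j _; rewrite rmorphM mulrA.
rewrite -[c l](subKr (\sum_(0 <= i < size x) e i * phi (P i l))) -cE.
apply: (nonunitB Bloc).
- rewrite big_seq; apply: (nonunit_sum Bloc) => i.
  by rewrite mem_index_iota => /andP [_ /em]; apply: nonunitMr.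
- rewrite big_seq; apply: (nonunit_sum Bloc) => j.
  by rewrite mem_index_iota => /andP [_ ltjh]; apply/nonunitMl/phi_nonunit/hP.
Qed.

Lemma rd_ext_ideal_ge (I : idealr A) : basically_regular phi ->
  (rd (canon_surj I) <= rd (canon_surj (ext_ideal Hphi I)))%N.
Proof.
move=> phibr; have [h [hrd hI hfree]] := cot_free_in_rd Aloc I noethA.
rewrite -hrd; apply: (cot_free_in_le_rd Bloc noethB); exists (map phi h); split.
- by rewrite size_map.
- move=> _ /mapP [a /hI aI ->]; apply/asboolP; exists [:: (a, 1)].
  by rewrite /= aI big_seq1 mulr1.
- by apply: cot_free_map => //; apply/allP => a /hI /idealr_nonunit.
Qed.

(* With I = m, the equality says that phi(x) spans (mB + n^2)/n^2, whose
   dimension is |x|: so phi(x) is cot-free and extends to a minimal basis. *)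
Lemma basically_regular_of_rd_eq :
  (forall I : idealr A, rd (canon_surj I) = rd (canon_surj (ext_ideal Hphi I))) ->
  basically_regular phi.
Proof.
move=> rdE x xbasis; pose m := maxideal Aloc.
have xm := generating_nonunit xbasis.1.
have phixm : all NB (map phi x).
  by rewrite all_map; apply/allP => a /(allP xm) /phi_nonunit.
have lexrd : (size x <= rd (canon_surj (ext_ideal Hphi m)))%N.
  rewrite -rdE; apply: (cot_free_in_le_rd Aloc noethA); exists x; split => //.
    by move=> a /(allP xm).
  exact: (minimal_basis_cot_free Aloc xbasis).
have [w [wrd wm wfree]] := cot_free_in_rd Bloc (ext_ideal Hphi m) noethB.
have [y ybasis] := minimal_basis_exists Bloc noethB.
apply: (cot_free_extends Bloc ybasis _ phixm) => c hc i0 lti0x; apply: NNPP => ci0U.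
have wspan j : (j < size w)%N -> cot_span (rem_nth (map phi x) i0) w`_j.
  move=> ltjw; apply: (cot_span_trans (cot_span_rem_nth hc lti0x ci0U)).
  apply: (cot_span_ext_ideal (I := m)); last exact/wm/mem_nth.
  by move=> a /xbasis.1 /genE [d ->]; rewrite lcomb_map; apply: cot_span_lcomb.
have := cot_free_size_le Bloc wfree (all_rem_nth i0 phixm) wspan.
rewrite size_rem_nth // size_map wrd => /(leq_trans lexrd).
by rewrite size_map in lti0x; case: (size x) lti0x => // n _; rewrite /= ltnn.
Qed.

End LocalHom.

Theorem corollary2p16 (A B : comNzRingType) (phi : {rmorphism A -> B})
  (noethA : noetherian A) (noethB : noetherian B) (Hphi : local_hom phi) :
  (forall I : idealr A,
      (rd (canon_surj (ext_ideal Hphi I)) <= rd (canon_surj I))%N) /\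
  (basically_regular phi <->
     forall I : idealr A, rd (canon_surj I) = rd (canon_surj (ext_ideal Hphi I))).
Proof.
have rd_le := rd_ext_ideal_le Hphi noethA noethB.
split=> //; split=> [phibr I | ]; last exact: basically_regular_of_rd_eq.
by apply/eqP; rewrite eqn_leq rd_le (rd_ext_ideal_ge Hphi noethA noethB I phibr).
Qed.
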